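(* Let $G$ be a compact, totally disconnected group and $\alpha$ an automorphism of $G$ that is topologically transitive. Then for every $k\in\mathbb{Z}\setminus\{0\}$ the map $\eta_k:G\to G$, $\eta_k(x)=x^{-1}\alpha^k(x)$, is surjective.
   Context: $\alpha$ is topologically transitive if there is $x\in G$ with $\{\alpha^n(x):n\in\mathbb{Z}\}$ dense in $G$. *)

From HB Require Import structures.
From mathcomp Require Import all_boot all_order all_algebra.
From mathcomp Require Import all_classical all_reals all_analysis.
Set Implicit Arguments. Unset Strict Implicit. Unset Printing Implicit Defensive.
Import Order.TTheory GRing.Theory Num.Theory.
Local Open Scope classical_set_scope.

Definition is_topological_group (G : topologicalType)
  (mul : G -> G -> G) (inv : G -> G) (one : G) : Prop :=
  [/\ (forall x y z, mul x (mul y z) = mul (mul x y) z),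
      (forall x, mul one x = x /\ mul x one = x),
      (forall x, mul (inv x) x = one /\ mul x (inv x) = one),
      continuous (fun p : G * G => mul p.1 p.2) & continuous inv].

Definition is_automorphism (G : topologicalType) (mul : G -> G -> G)
  (alpha alphai : G -> G) : Prop :=
  [/\ cancel alpha alphai, cancel alphai alpha,
      (forall x y, alpha (mul x y) = mul (alpha x) (alpha y)),
      continuous alpha & continuous alphai].

Definition zpow_map (G : Type) (alpha alphai : G -> G) (k : int) : G -> G :=
  match k with
  | Posz n => iter n alpha
  | Negz n => iter n.+1 alphai
  end.

Definition topologically_transitive (G : topologicalType)
  (alpha alphai : G -> G) : Prop :=
  exists x : G, dense (range (fun n : int => zpow_map alpha alphai n x)).

From HB Require Import structures.
From mathcomp Require Import all_boot all_order all_algebra.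
From mathcomp Require Import all_classical all_reals all_analysis.
Set Implicit Arguments. Unset Strict Implicit. Unset Printing Implicit Defensive.
Local Open Scope classical_set_scope.

(* Write eta x = x^-1 b(x) with b = alpha^k.  eta(G) is compact, hence closed,
   so if y is not in eta(G) some yN misses eta(G), where N is an open normal
   subgroup (compact totally disconnected spaces have a basis of clopen sets,
   and a clopen neighbourhood of 1 contains an open normal subgroup).  The set
   S = eta(G) N is invariant under the twisted conjugation t |-> g^-1 t b(g),
   and this makes its stabilizer {h | h S = S} an open normal b-invariant
   subgroup.  The intersection of its preimages under alpha^i, i < |k|, is
   then an open alpha-invariant subgroup; it meets the dense alpha-orbit, hence
   contains all of it, and so do its cosets: it is G.  Hence y lies in S, a
   contradiction. *)

Definition quasi_component (T : topologicalType) (x : T) :=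
  [set y | forall C : set T, clopen C -> C x -> C y].

Section CompactTotallyDisconnected.
Variable T : topologicalType.
Hypotheses (hT : hausdorff_space T) (cT : compact [set: T])
  (tdT : totally_disconnected [set: T]).

Lemma quasi_component_clopen_cover (x : T) (U : set T) :
  open U -> quasi_component x `<=` U -> exists C, [/\ clopen C, C x & C `<=` U].
Proof.
move=> oU QU; apply: contrapT => nC.
(* Otherwise the sets [C `\` U], [C] a clopen neighbourhood of [x], generate a
   proper filter, whose cluster points lie in the quasi-component but not in [U]. *)
pose F := filter_from [set C : set T | clopen C /\ C x] (fun C => C `&` ~` U).
have FF : Filter F.
  apply: filter_from_filter; first by exists setT; split => //; exact: clopenT.
  move=> A B [cA Ax] [cB Bx]; exists (A `&` B); first by split => //; exact: clopenI.
  by move=> z [[Az Bz] nUz].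
have PF : ProperFilter F.
  apply: filter_from_proper => C [cC Cx]; apply: contrapT => /set0P/negP.
  rewrite negbK => /eqP C0; apply: nC; exists C; split => // z Cz.
  by apply: contrapT => nUz; have : (C `&` ~` U) z by []; rewrite C0.
have [y [_ cly]] := cT PF filterT.
have Qy : quasi_component x y.
  move=> C cC Cx; apply: contrapT => nCy.
  have nb : nbhs y (~` C).
    by apply: open_nbhs_nbhs; split => //; apply: closed_openC; case: cC.
  have FC : F (C `&` ~` U) by exists C.
  by have [z [[Cz _] nCz]] := cly _ _ FC nb.
have nbU : nbhs y U by apply: open_nbhs_nbhs; split => //; exact: QU.
have FT : F (setT `&` ~` U) by exists setT => //; split => //; exact: clopenT.
by have [z [[_ nUz] Uz]] := cly _ _ FT nbU.
Qed.

Lemma quasi_component_closed (x : T) : closed (quasi_component x).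
Proof.
move=> y cly C cC Cx; have [_ clC] := cC; apply: clC.
by apply: closureS cly => z /(_ C cC Cx).
Qed.

Lemma quasi_component_connected (x : T) : connected (quasi_component x).
Proof.
set Q := quasi_component x.
apply/connectedP => E [E0 QE [sep1 sep2]].
pose P b := closure (E b).
have PQ b : P b `<=` Q.
  move=> z Pz; apply: quasi_component_closed; apply: closureS Pz; rewrite -/Q QE.
  by case: b => w ?; [right|left].
have Pdisj z : P false z -> P true z -> False.
  move=> Pf Pt; have := PQ _ _ Pf; rewrite QE => -[Ef|Et].
  - by have : (E false `&` closure (E true)) z by []; rewrite sep2.
  - by have : (closure (E false) `&` E true) z by []; rewrite sep1.
(* Normality separates the closures of the two pieces by disjoint open sets. *)
have snb : set_nbhs (P false) (~` P true).
  move=> z Pfz; apply: open_nbhs_nbhs; split; last by move=> Ptz; exact: Pdisj Pfz Ptz.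
  exact/closed_openC/closed_closure.
have [W sW clW] := compact_normal hT cT (@closed_closure _ _) snb.
pose O1 := W°; pose O2 := ~` closure W.
have dO z : O1 z -> O2 z -> False.
  by move=> /interior_subset Wz; apply; exact: subset_closure.
have PO1 : P false `<=` O1 by move=> z /sW /nbhs_interior/nbhs_singleton.
have PO2 : P true `<=` O2 by move=> z Ptz /clW; apply.
have QO : Q `<=` O1 `|` O2.
  by rewrite QE => z [/subset_closure/PO1|/subset_closure/PO2]; [left|right].
have oO2 : open O2 by exact/closed_openC/closed_closure.
have [C [[oC clC] Cx CO]] :=
  quasi_component_clopen_cover (openU (@open_interior _ W) oO2) QO.
have clopenCI (O O' : set T) : open O -> open O' -> (forall z, O z -> O' z -> False) ->
    C `<=` O `|` O' -> clopen (C `&` O).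
  move=> oO oO' dOO' COO'; split; first exact: openI.
  have -> : C `&` O = C `&` ~` O'.
    apply/seteqP; split => z [Cz H]; split => //; first exact: dOO'.
    by case: (COO' _ Cz).
  by apply: closedI => //; exact: open_closedC.
have [e Ee] := E0 true; have [e' Ee'] := E0 false.
have Qe : Q e by rewrite QE; right.
have Qe' : Q e' by rewrite QE; left.
case: (CO _ Cx) => [Ox|Ox].
- have [_ O1e] := Qe _ (clopenCI _ _ (@open_interior _ W) oO2 dO CO) (conj Cx Ox).
  exact: dO O1e (PO2 _ (subset_closure Ee)).
- have COO : C `<=` O2 `|` O1 by move=> z /CO [];[right|left].
  have [_ O2e] := Qe' _ (clopenCI _ _ oO2 (@open_interior _ W)
    (fun z h1 h2 => dO _ h2 h1) COO) (conj Cx Ox).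
  exact: dO (PO1 _ (subset_closure Ee')) O2e.
Qed.

Lemma quasi_component1 (x : T) : quasi_component x = [set x].
Proof.
apply/seteqP; split; last by move=> _ -> C.
rewrite -(tdT (I : setT x)); apply: connected_component_max => //.
exact: quasi_component_connected.
Qed.

Lemma compact_totally_disconnected_zero_dimensional : zero_dimensional T.
Proof.
move=> x y /eqP nxy; have : ~ quasi_component x y.
  by rewrite quasi_component1 => yx; exact: nxy.
by move=> /existsNP [C /not_implyP [cC /not_implyP [Cx nCy]]]; exists C.
Qed.

Lemma clopen_nbhs_subset (x : T) (U : set T) : nbhs x U ->
  exists C, [/\ clopen C, C x & C `<=` U].
Proof.
move=> nU; have [C [Cx cC] CU] := zero_dimensional_cvg hT
  compact_totally_disconnected_zero_dimensional cT nU.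
by exists C.
Qed.

End CompactTotallyDisconnected.

Lemma iter_can (T : Type) (f g : T -> T) n : cancel f g -> cancel (iter n f) (iter n g).
Proof. by move=> fK; elim: n => [//|n IH] x; rewrite [iter n.+1 f x]iterSr /= IH fK. Qed.

Lemma continuous_iter (T : topologicalType) (f : T -> T) n :
  continuous f -> continuous (iter n f).
Proof.
move=> fC; elim: n => [|n IH] x; first exact: cvg_id.
exact: (continuous_comp (IH x) (fC _)).
Qed.

Section TopologicalGroup.
Variables (G : topologicalType) (mul : G -> G -> G) (inv : G -> G) (one : G).
Hypothesis HG : is_topological_group mul inv one.

Lemma mulgA x y z : mul x (mul y z) = mul (mul x y) z.
Proof. by case: HG. Qed.
Lemma mul1g x : mul one x = x. Proof. by case: HG => _ /(_ x) []. Qed.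
Lemma mulg1 x : mul x one = x. Proof. by case: HG => _ /(_ x) []. Qed.
Lemma mulVg x : mul (inv x) x = one. Proof. by case: HG => _ _ /(_ x) []. Qed.
Lemma mulgV x : mul x (inv x) = one. Proof. by case: HG => _ _ /(_ x) []. Qed.
Lemma mulKg x y : mul (inv x) (mul x y) = y. Proof. by rewrite mulgA mulVg mul1g. Qed.
Lemma mulKVg x y : mul x (mul (inv x) y) = y. Proof. by rewrite mulgA mulgV mul1g. Qed.
Lemma mulgK x y : mul (mul y x) (inv x) = y. Proof. by rewrite -mulgA mulgV mulg1. Qed.
Lemma mulgI x y z : mul x y = mul x z -> y = z.
Proof. by move=> e; rewrite -(mulKg x y) e mulKg. Qed.
Lemma invgK x : inv (inv x) = x.
Proof. by apply: (@mulgI (inv x)); rewrite mulgV mulVg. Qed.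
Lemma invMg x y : inv (mul x y) = mul (inv y) (inv x).
Proof. by apply: (@mulgI (mul x y)); rewrite mulgV mulgA mulgK mulgV. Qed.
Lemma invg1 : inv one = one.
Proof. by rewrite -{2}(mulVg one) mulg1. Qed.

Lemma mul_near a b U : nbhs (mul a b) U ->
  exists2 A, nbhs a A & exists2 B, nbhs b B & forall x y, A x -> B y -> U (mul x y).
Proof.
case: HG => _ _ _ mulC _ nU; have [[A B] /= [nA nB] AB] := mulC (a, b) U nU.
by exists A => //; exists B => // x y Ax By; exact: (AB (x, y)).
Qed.

Lemma inv_near a U : nbhs (inv a) U -> nbhs a [set x | U (inv x)].
Proof. by case: HG => _ _ _ _ invC; exact: invC. Qed.

Lemma lmul_near g a U : nbhs (mul g a) U -> nbhs a [set x | U (mul g x)].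
Proof.
move=> /mul_near [A nA [B nB AB]]; apply: filterS nB => y By.
by apply: AB => //; exact: nbhs_singleton.
Qed.

Section Morphism.
Variable f : G -> G.
Hypothesis fM : {morph f : x y / mul x y}.

Lemma morph1 : f one = one.
Proof. by apply: (@mulgI (f one)); rewrite -fM !mulg1. Qed.

Lemma morphV x : f (inv x) = inv (f x).
Proof. by apply: (@mulgI (f x)); rewrite -fM !mulgV morph1. Qed.

Lemma iter_morph n : {morph iter n f : x y / mul x y}.
Proof. by elim: n => [//|n IH] x y /=; rewrite IH fM. Qed.

End Morphism.

Lemma hausdorff_totally_disconnected :
  totally_disconnected [set: G] -> hausdorff_space G.
Proof.
move=> td p q cl; apply: contrapT => npq.
have closed1 (x : G) : closed [set x].
  have cc : connected (closure [set x]) by apply: connected_closure; exact: connected1.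
  have := @connected_component_max _ setT (closure [set x]) x _ _ cc.
  by rewrite (td x I); apply => //; exact: subset_closure.
(* [one] and [inv p * q] are separated by a neighbourhood [V] of [one] with
   [V * V^-1] avoiding [inv p * q]; then [p V] and [q V] are disjoint. *)
pose u := mul (inv p) q.
have nu : nbhs (mul one (inv one)) (~` [set u]).
  rewrite mulgV; apply: open_nbhs_nbhs; split; first exact/closed_openC.
  by move=> /= e; apply: npq; rewrite -(mulKVg p q) -/u -e mulg1.
have [A nA [B nB AB]] := mul_near nu.
pose V := A `&` [set x | B (inv x)].
have nV : nbhs one V by apply: filterI => //; apply: inv_near.
have np : nbhs p [set z | V (mul (inv p) z)] by apply: lmul_near; rewrite mulVg.
have nq : nbhs q [set z | V (mul (inv q) z)] by apply: lmul_near; rewrite mulVg.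
have [z [[Az _] [_ Biz]]] := cl _ _ np nq.
by apply: (AB _ _ Az Biz) => /=; rewrite invMg invgK mulgA mulgK.
Qed.

Definition is_subgroup (H : set G) :=
  [/\ H one, forall x y, H x -> H y -> H (mul x y) & forall x, H x -> H (inv x)].

Definition is_normal_subgroup (N : set G) :=
  is_subgroup N /\ forall g x, N x -> N (mul (inv g) (mul x g)).

Lemma compact_open_mul_nbhs (C : set G) : compact C -> open C ->
  exists2 W, nbhs one W & forall c w, C c -> W w -> C (mul c w).
Proof.
move=> cC oC.
have near_C c : C c -> \forall c' \near c & w \near one, C (mul c' w).
  move=> Cc; have nC : nbhs (mul c one) C.
    by rewrite mulg1; apply: open_nbhs_nbhs; split.
  have [A nA [B nB AB]] := mul_near nC.
  by exists (A, B) => // -[x y] [Ax By]; exact: AB.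
have := (compact_near_coveringP C).1 cC G (nbhs one) (fun w c => C (mul c w)) _ near_C.
move=> WC; exists [set w | C `<=` (fun c => C (mul c w))]; first exact: WC.
by move=> c w Cc Ww; exact: Ww.
Qed.

Lemma compact_conj_nbhs (W0 : set G) : compact [set: G] -> nbhs one W0 ->
  exists2 W, nbhs one W & forall g w, W w -> W0 (mul (inv g) (mul w g)).
Proof.
move=> cG nW0.
have near_W0 g : [set: G] g ->
    \forall g' \near g & w \near one, W0 (mul (inv g') (mul w g')).
  move=> _; have n0 : nbhs (mul (inv g) (mul one g)) W0 by rewrite mul1g mulVg.
  have [A1 nA1 [B1 nB1 AB1]] := mul_near n0.
  have [A2 nA2 [B2 nB2 AB2]] := mul_near nB1.
  exists ([set x | A1 (inv x)] `&` B2, A2).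
    by split => //; apply: filterI => //; exact: inv_near.
  by move=> [x y] [[Ax Bx] Ay] /=; apply: AB1 => //; exact: AB2.
have := (compact_near_coveringP _).1 cG G (nbhs one)
  (fun w g => W0 (mul (inv g) (mul w g))) _ near_W0.
move=> WC; exists [set w | [set: G] `<=` (fun g => W0 (mul (inv g) (mul w g)))];
  first exact: WC.
by move=> g w Ww; exact: Ww.
Qed.

Inductive generated (V : set G) : G -> Prop :=
| generated1 : generated V one
| generatedM x v : generated V x -> V v -> generated V (mul x v).

Lemma generated_subgroup (V : set G) :
  (forall v, V v -> V (inv v)) -> is_subgroup (generated V).
Proof.
move=> VV; have genMM a b : generated V a -> generated V b -> generated V (mul a b).
  move=> ga; elim => [|y v _ IH Vv]; first by rewrite mulg1.
  by rewrite mulgA; apply: generatedM.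
split => [||x]; [exact: generated1|exact: genMM|].
elim => [|y v _ IH Vv]; first by rewrite invg1; exact: generated1.
rewrite invMg; apply: genMM => //; rewrite -(mul1g (inv v)).
by apply: generatedM; [exact: generated1|exact: VV].
Qed.

(* [V] below is a symmetric neighbourhood of [one] all of whose conjugates lie
   in [W0], and [C * W0] is contained in [C]; the subgroup generated by [V] is
   thus normal and contained in [C]. *)
Lemma open_normal_subgroup_sub_clopen (C : set G) : compact [set: G] ->
  clopen C -> C one -> exists N, [/\ is_normal_subgroup N, nbhs one N & N `<=` C].
Proof.
move=> cG [oC clC] C1.
have [W0 nW0 CW0] := compact_open_mul_nbhs (subclosed_compact clC cG (subsetT C)) oC.
have [W1 nW1 W1W0] := compact_conj_nbhs cG nW0.
pose V := [set v | forall g,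
  W0 (mul (inv g) (mul v g)) /\ W0 (mul (inv g) (mul (inv v) g))].
have nV : nbhs one V.
  have ni : nbhs one [set x | W1 (inv x)] by apply: inv_near; rewrite invg1.
  by apply: filterS (filterI nW1 ni) => v [W1v W1iv] g; split; apply: W1W0.
have VV v : V v -> V (inv v) by move=> Vv g; have [] := Vv g; rewrite invgK.
have conjM g h v : mul (inv g) (mul (mul (inv h) (mul v h)) g) =
    mul (inv (mul h g)) (mul v (mul h g)).
  by rewrite invMg !mulgA -!mulgA.
have Vconj h v : V v -> V (mul (inv h) (mul v h)).
  move=> Vv g; rewrite conjM; split; first by have [] := Vv (mul h g).
  have -> : inv (mul (inv h) (mul v h)) = mul (inv h) (mul (inv v) h).
    by rewrite !invMg invgK mulgA.
  by rewrite conjM; have [] := Vv (mul h g).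
have genV := generated_subgroup VV; have [_ genMM _] := genV.
exists (generated V); split.
- split => // g x; elim => [|y v _ IH Vv]; first by rewrite mul1g mulVg; exact: generated1.
  have -> : mul (inv g) (mul (mul y v) g) =
      mul (mul (inv g) (mul y g)) (mul (inv g) (mul v g)) by rewrite !mulgA mulgK.
  apply: genMM => //; rewrite -[X in generated _ X]mul1g.
  by apply: generatedM; [exact: generated1|exact: Vconj].
- apply: filterS nV => v Vv; rewrite -(mul1g v).
  by apply: generatedM => //; exact: generated1.
- move=> x; elim => // y v _ Cy Vv; apply: CW0 Cy _.
  by have [] := Vv one; rewrite invg1 mul1g mulg1.
Qed.

Section TwistedStabilizer.
Variables (b bi : G -> G) (N : set G).
Hypotheses (bM : {morph b : x y / mul x y}) (biK : cancel bi b)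
  (hN : is_normal_subgroup N).

Definition twisted_set := [set t | exists x n, N n /\ t = mul (mul (inv x) (b x)) n].
Local Notation S := twisted_set.

Lemma twisted_set1 : S one.
Proof.
have [[N1 _ _] _] := hN.
by exists one, one; split; rewrite // (morph1 bM) invg1 !mulg1.
Qed.

Lemma twisted_set_conj g t : S t -> S (mul (mul (inv g) t) (b g)).
Proof.
have [_ Nconj] := hN; move=> [x [n [Nn ->]]].
exists (mul x g), (mul (inv (b g)) (mul n (b g))); split; first exact: Nconj.
by rewrite bM invMg !mulgA mulgK.
Qed.

Lemma twisted_set_conjE g t : S (mul (mul (inv g) t) (b g)) <-> S t.
Proof.
split; last exact: twisted_set_conj.
by move=> /(twisted_set_conj (inv g)); rewrite invgK (morphV bM) mulgA mulgK mulKVg.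
Qed.

Lemma twisted_set_lmul n t : N n -> S t -> S (mul n t).
Proof.
have [[_ NM _] Nconj] := hN; move=> Nn [x [m [Nm ->]]].
set e := mul (inv x) (b x).
exists x, (mul (mul (inv e) (mul n e)) m); split; first by apply: NM => //; exact: Nconj.
by rewrite -/e (mulgA e) mulKVg !mulgA.
Qed.

Definition twisted_stabilizer := [set h | forall t, S (mul h t) <-> S t].
Local Notation H := twisted_stabilizer.

Lemma twisted_stabilizer_normal : is_normal_subgroup H.
Proof.
split; first split.
- by move=> t; rewrite mul1g.
- by move=> h k Hh Hk t; rewrite -mulgA Hh Hk.
- by move=> h Hh t; rewrite -(Hh (mul (inv h) t)) mulKVg.
move=> g h Hh t.
rewrite -(twisted_set_conjE (inv g) (mul _ t)) -[S t](twisted_set_conjE (inv g)) invgK.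
by rewrite !mulgA mulgV mul1g -!mulgA Hh.
Qed.

Lemma twisted_stabilizerN n : N n -> H n.
Proof.
have [[_ _ NV] _] := hN; move=> Nn t; split; last exact: twisted_set_lmul.
by move=> /(twisted_set_lmul (NV _ Nn)); rewrite mulKg.
Qed.

Lemma twisted_stabilizer_rmul h t : H h -> S (mul t h) <-> S t.
Proof.
have [_ Hconj] := twisted_stabilizer_normal; move=> Hh.
have -> : mul t h = mul (mul (inv (inv t)) (mul h (inv t))) t.
  by rewrite invgK -!mulgA mulVg mulg1.
exact: Hconj.
Qed.

(* [h S = S (b h)], since [h S b(h)^-1 = S]. *)
Lemma twisted_stabilizerP h : H h <-> forall t, S (mul t (b h)) <-> S t.
Proof.
have hS t : S (mul t (b h)) <-> S (mul h t).
  by rewrite -(twisted_set_conjE h (mul h t)) mulKg.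
by split => Hh t; [rewrite hS Hh|rewrite -hS Hh].
Qed.

Lemma twisted_stabilizer_morph h : H (b h) <-> H h.
Proof.
have [_ Hconj] := twisted_stabilizer_normal.
split=> [Hbh|Hh t]; first by apply/twisted_stabilizerP => t; exact: twisted_stabilizer_rmul.
have -> : mul (b h) t = mul t (b (mul (inv (bi t)) (mul h (bi t)))).
  by rewrite !bM (morphV bM) biK mulKVg.
exact/(twisted_stabilizerP _).1/Hconj.
Qed.

Lemma twisted_stabilizer_sub : H `<=` S.
Proof. by move=> h /(_ one) Hh; rewrite -(mulg1 h) Hh; exact: twisted_set1. Qed.

End TwistedStabilizer.

Section DenseOrbit.
Variables (a ai : G -> G) (z : G).
Hypotheses (aiK : cancel ai a) (aM : {morph a : x y / mul x y}) (aC : continuous a)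
  (dz : dense (range (fun n : int => zpow_map a ai n z))).

Lemma dense_orbit_nbhs (U : set G) (g : G) : nbhs g U -> exists n, U (zpow_map a ai n z).
Proof.
rewrite nbhsE => -[V [oV Vg] VU].
have [w [Vw [n _ nw]]] := dz (ex_intro _ g Vg) oV.
by exists n; apply: VU; rewrite nw.
Qed.

Lemma dense_orbit_subgroup_invariant (H : set G) : is_subgroup H -> nbhs one H ->
  (forall x, H (a x) <-> H x) -> forall g, H g.
Proof.
move=> [_ HM HV] nH Ha.
have Hai x : H (ai x) <-> H x by rewrite -[H x](congr1 H (aiK x)) Ha.
have Hiter f : (forall x, H (f x) <-> H x) -> forall n x, H (iter n f x) <-> H x.
  by move=> Hf; elim=> [//|n IH] x /=; rewrite Hf IH.
have Hzpow n x : H (zpow_map a ai n x) <-> H x by case: n => n; apply: Hiter.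
have [n Hn] := dense_orbit_nbhs nH.
have Hz : H z by rewrite -(Hzpow n).
move=> g; have ng : nbhs g [set p | H (mul (inv g) p)].
  by apply: lmul_near; rewrite mulVg.
have [n' /HV Hn'] := dense_orbit_nbhs ng.
have := HM _ _ ((Hzpow n' z).2 Hz) Hn'.
by rewrite invMg invgK mulKVg.
Qed.

(* The intersection of the preimages of [H] under the [a^i], [i < m], is
   [a]-invariant. *)
Lemma dense_orbit_subgroup_iter_invariant (H : set G) m : (0 < m)%N ->
  is_subgroup H -> nbhs one H ->
  (forall x, H (iter m a x) <-> H x) -> forall g, H g.
Proof.
move=> m0 [H1 HM HV] nH Ham g.
pose K := [set g | forall i, (i < m)%N -> H (iter i a g)].
suff /(_ g 0%N m0) : forall g, K g by [].
apply: dense_orbit_subgroup_invariant.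
- split => [i _|x y Kx Ky i im|x Kx i im].
  + by rewrite (morph1 (iter_morph aM i)).
  + by rewrite (iter_morph aM); apply: HM; [exact: Kx|exact: Ky].
  + by rewrite (morphV (iter_morph aM i)); apply: HV; exact: Kx.
- have nHi i : nbhs one [set x | H (iter i a x)].
    have := @continuous_iter _ _ i aC one H; rewrite /= (morph1 (iter_morph aM i)).
    by apply.
  rewrite /K; clear K; elim: m {Ham m0} => [|m IH]; first exact: filterS filterT.
  apply: filterS (filterI IH (nHi m)) => x [Kx Hx] i.
  by rewrite ltnS leq_eqVlt => /orP[/eqP->|/Kx].
- move=> x; split=> [Kx [|i] im|Kx i im].
  + rewrite -Ham -(prednK m0) iterSr; apply: Kx.
    by rewrite prednK.
  + by rewrite iterSr; apply: Kx; exact: ltnW.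
  + rewrite -iterSr; have [im'|mi] := ltnP i.+1 m; first exact: Kx i.+1 im'.
    have -> : i.+1 = m by apply/eqP; rewrite eqn_leq im mi.
    by rewrite Ham; exact: Kx 0%N m0.
Qed.

End DenseOrbit.

Lemma twisted_map_continuous (b : G -> G) : continuous b ->
  continuous (fun x => mul (inv x) (b x)).
Proof.
move=> bC x U /mul_near [A nA [B nB AB]].
by apply: filterS (filterI (inv_near nA) (bC x B nB)) => w [Aw Bw]; exact: AB.
Qed.

Lemma twisted_map_surjective (b bi : G -> G) : compact [set: G] ->
  totally_disconnected [set: G] -> {morph b : x y / mul x y} -> cancel bi b ->
  continuous b ->
  (forall H, is_subgroup H -> nbhs one H -> (forall x, H (b x) <-> H x) ->
    forall g, H g) ->
  forall y, exists x, mul (inv x) (b x) = y.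
Proof.
move=> cG tdG bM biK bC b_ergodic y; apply: contrapT => ny.
have hG := hausdorff_totally_disconnected tdG.
pose eta x := mul (inv x) (b x).
have clS : closed (range eta).
  apply: (compact_closed hG); apply: continuous_compact => //.
  exact/continuous_subspaceT/twisted_map_continuous.
have nS : nbhs one [set w | ~ range eta (mul y w)].
  apply: (lmul_near (g := y) (U := ~` range eta)); rewrite mulg1; apply: open_nbhs_nbhs.
  by split; [exact: closed_openC|move=> [x _ e]; apply: ny; exists x].
have [C [cC C1 CS]] := clopen_nbhs_subset hG cG tdG nS.
have [N [hN nN NC]] := open_normal_subgroup_sub_clopen cG cC C1.
have [[_ _ NV] _] := hN.
have [Hsub _] := twisted_stabilizer_normal bM hN.
have nH : nbhs one (twisted_stabilizer b N).
  by apply: filterS nN; exact: twisted_stabilizerN.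
have Hy := b_ergodic _ Hsub nH (twisted_stabilizer_morph bM biK hN) y.
have [x [n [Nn ey]]] := twisted_stabilizer_sub bM hN Hy.
by apply: (CS (inv n)); [exact/NC/NV|exists x => //; rewrite ey mulgK].
Qed.

End TopologicalGroup.

Theorem proposition7p1 (G : topologicalType)
  (mul : G -> G -> G) (inv : G -> G) (one : G) (alpha alphai : G -> G) :
  is_topological_group mul inv one ->
  compact [set: G] ->
  totally_disconnected [set: G] ->
  is_automorphism mul alpha alphai ->
  topologically_transitive alpha alphai ->
  forall k : int, k != 0%R ->
    forall y : G, exists x : G, mul (inv x) (zpow_map alpha alphai k x) = y.
Proof.
move=> HG cG tdG [aK aiK aM aC aiC] [z dz] k k0.
have aiM : {morph alphai : x y / mul x y}.
  by move=> x y; apply: (can_inj aK); rewrite aM !aiK.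
have orbitP := dense_orbit_subgroup_iter_invariant HG aiK aM aC dz.
case: k k0 => m k0.
- have m0 : (0 < m)%N by rewrite lt0n.
  apply: (twisted_map_surjective HG cG tdG (iter_morph aM m) (iter_can m aiK)
    (@continuous_iter _ _ m aC)) => H Hsub nH Hb.
  exact: orbitP m0 Hsub nH Hb.
- apply: (twisted_map_surjective HG cG tdG (iter_morph aiM m.+1) (iter_can m.+1 aK)
    (@continuous_iter _ _ m.+1 aiC)) => H Hsub nH Hb.
  apply: (orbitP _ _ (ltn0Sn m) Hsub nH) => x.
  by rewrite -[in X in _ <-> X](iter_can m.+1 aK x) Hb.
Qed.
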